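(* Let $G=(K\cup I,E)$ be a split graph and $(V,\mathcal{F})$ the split graph vertex shelling antimatroid defined on $G$. Let $u,v$ be distinct elements of $V$. Then $V\setminus\{u,v\}\in\mathcal{F}$ if and only if $u\sim v$, or at least one of $u,v$ is isolated in $G$.
   Context: A split graph $G=(K\cup I,E)$ is a finite simple graph whose vertex set $V=K\cup I$ comes with a fixed partition into a clique $K$ and an independent set $I$. We write $u\sim v$ if $u,v$ are adjacent; a vertex is isolated if it has no neighbours. A vertex is simplicial if its neighbours induce a clique. The split graph vertex shelling antimatroid of $G$ is $(V,\mathcal{F})$ where $F\subseteq V$ is feasible iff there is an ordering $f_1,\dots,f_{|F|}$ of $F$ such that each $f_j$ is simplicial in $G$ minus $\{f_1,\dots,f_{j-1}\}$ (the empty set is feasible). *)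

From mathcomp Require Import all_boot.
Set Implicit Arguments. Unset Strict Implicit. Unset Printing Implicit Defensive.

Definition simple_graph (T : finType) (e : rel T) : Prop :=
  symmetric e /\ irreflexive e.

Definition split_partition (T : finType) (e : rel T) (K : {set T}) : Prop :=
  (forall x y, x \in K -> y \in K -> x != y -> e x y) /\
  (forall x y, x \in ~: K -> y \in ~: K -> ~~ e x y).

Definition isolated (T : finType) (e : rel T) (v : T) : bool :=
  [forall x, ~~ e v x].

Definition simplicial_in (T : finType) (e : rel T) (R : {set T}) (v : T) : bool :=
  [forall x in R, forall y in R, [&& e v x, e v y & x != y] ==> e x y].

Fixpoint shelling_seq (T : finType) (e : rel T) (R : {set T}) (s : seq T) : bool :=
  match s with
  | [::] => true
  | x :: s' => [&& x \in R, simplicial_in e R x & shelling_seq e (R :\ x) s']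
  end.

Definition shelling_feasible (T : finType) (e : rel T) (F : {set T}) : Prop :=
  exists s : seq T, [set x in s] = F /\ shelling_seq e [set: T] s.

From mathcomp Require Import all_boot.

Set Implicit Arguments.
Unset Strict Implicit.
Unset Printing Implicit Defensive.

(* If u and v are kept by a shelling, then at the moment a neighbour c of
   both is removed, u and v are still present, so simpliciality of c forces
   u ~ v. In a split graph two nonadjacent non-isolated vertices u, v are
   always joined either by a common neighbour or by a path u - x - y - v
   through the clique; removing the first of x, y then produces a common
   neighbour. Conversely, while vertices other than u, v remain, one of them
   is simplicial: an independent vertex, a clique vertex with no independent
   neighbour, or else any clique vertex, whose independent neighbours can
   only be u or v and are then adjacent to everything it sees. *)

Section Shelling.
Variables (T : finType) (e : rel T).

Lemma simplicial_inP (R : {set T}) w :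
  reflect (forall x y, x \in R -> y \in R -> e w x -> e w y -> x != y -> e x y)
          (simplicial_in e R w).
Proof.
apply: (iffP forallP) => [H x y xR yR wx wy nxy | H x].
  by have /forall_inP/(_ y yR) := implyP (H x) xR; rewrite wx wy nxy; apply.
apply/implyP => xR; apply/forall_inP => y yR; apply/implyP => /and3P[].
exact: H.
Qed.

Lemma isolatedPn v : reflect (exists x, e v x) (~~ isolated e v).
Proof. by apply: (iffP forallPn) => -[x] exv; exists x; rewrite ?negbK in exv *. Qed.

Lemma shelling_seq_sub (R : {set T}) s : shelling_seq e R s -> {subset s <= R}.
Proof.
elim: s R => //= a s IH R /and3P[aR _ /IH sR] z; rewrite inE => /predU1P[-> //|].
by move/sR; rewrite inE => /andP[].
Qed.

(* [R'] is the set of vertices remaining when the first [w] satisfying [P]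
   is removed. *)
Lemma shelling_seq_first (P : pred T) (R : {set T}) s :
  shelling_seq e R s -> has P s ->
  exists w (R' : {set T}), [/\ P w, simplicial_in e R' w &
     forall z, z \in R -> P z || (z \notin s) -> z \in R'].
Proof.
elim: s R => [|a s IH] R //= /and3P[_ sa sh].
case Pa: (P a) => /= hs; first by exists a, R.
have [w [R' [Pw sw HR']]] := IH _ sh hs.
exists w, R'; split=> // z zR /orP[Pz | ].
  by apply: HR'; rewrite ?Pz // !inE zR andbT; apply: contraFneq Pa => <-.
by rewrite inE negb_or => /andP[za zs]; apply: HR'; rewrite ?inE ?za ?zs ?orbT.
Qed.

Lemma shelling_seq_common_nbr (R : {set T}) s u v c :
  shelling_seq e R s -> u \in R -> v \in R -> u \notin s -> v \notin s ->
  c \in s -> e c u -> e c v -> u != v -> e u v.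
Proof.
move=> sh uR vR us vs cs cu cv nuv.
have hc : has (pred1 c) s by apply/hasP; exists c; rewrite /= ?eqxx.
have [w [R' [/eqP-> sw HR']]] := shelling_seq_first sh hc.
by apply: (simplicial_inP _ _ sw) => //; apply: HR'; rewrite ?us ?vs ?orbT.
Qed.

Hypothesis esym : symmetric e.

Lemma shelling_seq_bridge (R : {set T}) s u v x y :
  shelling_seq e R s -> u \in R -> v \in R -> u \notin s -> v \notin s ->
  x \in s -> y \in s -> e u x -> e v y -> x = y \/ e x y -> u != v -> e u v.
Proof.
move=> sh uR vR us vs xs ys ux vy xy nuv.
have common c : c \in s -> e c u -> e c v -> e u v.
  by move=> cs cu cv; apply: (shelling_seq_common_nbr (c := c) sh).
case: xy => [xy | exy]; first by subst y; apply: (common x); rewrite // esym.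
have [-> | nuy] := eqVneq u y; first by rewrite esym.
have [-> // | nvx] := eqVneq v x.
pose P := [pred z | (z == x) || (z == y)].
have hP : has P s by apply/hasP; exists x; rewrite //= eqxx.
have [w [R' [Pw sw HR']]] := shelling_seq_first sh hP.
have sR := shelling_seq_sub sh.
case/orP: Pw => /eqP wE; subst w.
- have uy : e u y.
    apply: (simplicial_inP _ _ sw) => //; try by rewrite esym.
    + by apply: HR'; rewrite ?uR ?us ?orbT.
    + by apply: HR'; rewrite ?sR //= eqxx orbT.
  by apply: (common y); rewrite // esym.
- have vx : e v x.
    apply: (simplicial_inP _ _ sw) => //; try by rewrite esym.
    + by apply: HR'; rewrite ?vR ?vs ?orbT.
    + by apply: HR'; rewrite ?sR //= eqxx.
  by apply: (common x); rewrite // esym.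
Qed.

Lemma shelling_seq_onto (X : {set T}) :
  (forall R : {set T}, X \subset R -> forall w0, w0 \in R :\: X ->
     exists2 w, w \in R :\: X & simplicial_in e R w) ->
  forall R : {set T}, X \subset R ->
  exists s, [set x in s] = R :\: X /\ shelling_seq e R s.
Proof.
move=> step R; have [n] := ubnP #|R :\: X|; elim: n R => // n IH R leRn XR.
have [RX0 | [w0 w0RX]] := set_0Vmem (R :\: X).
  by exists [::]; split=> //; apply/setP => z; rewrite RX0 !inE.
have [w wRX sw] := step R XR w0 w0RX.
move: (wRX); rewrite inE => /andP[wX wR].
have XRw : X \subset R :\ w.
  by apply/subsetP => z zX; rewrite !inE (subsetP XR) ?andbT //; apply: contraNneq wX => <-.
have [|s [Hs sh]] := IH (R :\ w) _ XRw.
  have -> : R :\ w :\: X = R :\: X :\ w by rewrite setDDl setUC -setDDl.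
  by move: leRn; rewrite (cardsD1 w) wRX add1n ltnS.
exists (w :: s); split; last by rewrite /= wR sw.
apply/setP => z; move/setP/(_ z): Hs; rewrite !inE => Hz.
by have [-> | nzw] := eqVneq z w; rewrite ?wX ?wR //= Hz nzw.
Qed.

End Shelling.

Section SplitGraph.
Variables (T : finType) (e : rel T) (K : {set T}).
Hypothesis esym : symmetric e.
Hypothesis Kclique : forall x y, x \in K -> y \in K -> x != y -> e x y.
Hypothesis Iindep : forall x y, x \in ~: K -> y \in ~: K -> ~~ e x y.

Lemma nbr_notin_K x y : x \notin K -> e x y -> y \in K.
Proof. by move=> xK; apply: contraTT => yK; apply: Iindep; rewrite inE. Qed.

Lemma simplicial_of_nbrs_in_K (R : {set T}) w :
  (forall x, x \in R -> e w x -> x \in K) -> simplicial_in e R w.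
Proof. by move=> nK; apply/simplicial_inP => x y xR yR wx wy; apply: Kclique; apply: nK. Qed.

Lemma split_bridge u v :
  u != v -> ~~ e u v -> ~~ isolated e u -> ~~ isolated e v ->
  exists x y, [/\ e u x, e v y & x = y \/ e x y].
Proof.
move=> nuv nev /isolatedPn[x ux] /isolatedPn[y vy].
case uK: (u \in K); case vK: (v \in K).
- by move: nev; rewrite Kclique.
- have yK := nbr_notin_K (negbT vK) vy.
  exists y, y; split=> //; last by left.
  by apply: Kclique; rewrite ?uK //; apply: contraNneq nev => ->; rewrite esym.
- have xK := nbr_notin_K (negbT uK) ux.
  exists x, x; split=> //; last by left.
  by apply: Kclique; rewrite ?vK //; apply: contraNneq nev => ->.
- have xK := nbr_notin_K (negbT uK) ux; have yK := nbr_notin_K (negbT vK) vy.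
  exists x, y; split=> //; have [-> | nxy] := eqVneq x y; [by left | right].
  exact: Kclique.
Qed.

Variables u v : T.
Hypothesis huv : e u v \/ isolated e u \/ isolated e v.

Lemma adj_of_nonisolated a b :
  a \in [set u; v] -> b \in [set u; v] -> a != b ->
  ~~ isolated e a -> ~~ isolated e b -> e a b.
Proof.
rewrite !inE => /orP[]/eqP-> /orP[]/eqP->; rewrite ?eqxx // => _ ni1 ni2;
  [|rewrite esym]; by case: huv => [|[]] h; move: ni1 ni2; rewrite ?h.
Qed.

Lemma exists_simplicial (R : {set T}) w0 :
  [set u; v] \subset R -> w0 \in R :\: [set u; v] ->
  exists2 w, w \in R :\: [set u; v] & simplicial_in e R w.
Proof.
set A := R :\: [set u; v] => uvR w0A.
have [w /andP[wA wK] | AK] := pickP [pred w in A | w \notin K].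
  by exists w => //; apply: simplicial_of_nbrs_in_K => x _; apply: nbr_notin_K.
have out x : x \in R -> x \notin K -> x \in [set u; v].
  move=> xR xK; apply: contraNT xK => xuv.
  by have := AK x; rewrite /= inE xuv xR => /negbFE.
have [w /andP[wA /forall_inP wnK] | AnK] :=
  pickP [pred w in A | [forall x in R, e w x ==> (x \in K)]].
  by exists w => //; apply: simplicial_of_nbrs_in_K => x xR /(implyP (wnK x xR)).
exists w0 => //; apply/simplicial_inP.
have key x y : x \in R -> y \in R -> e w0 x -> e w0 y -> x != y -> x \notin K -> e x y.
  move=> xR yR wx wy nxy xK; have xuv := out x xR xK.
  have nix : ~~ isolated e x by apply/isolatedPn; exists w0; rewrite esym.
  have [yuv | yuv] := boolP (y \in [set u; v]).
    by apply: adj_of_nonisolated => //; apply/isolatedPn; exists w0; rewrite esym.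
  have yA : y \in A by rewrite inE yuv yR.
  have /forall_inPn[z zR] : ~~ [forall x in R, e y x ==> (x \in K)].
    by have := AnK y; rewrite /= yA => /negbT.
  rewrite negb_imply => /andP[yz zK].
  have [zx | nzx] := eqVneq z x; first by rewrite esym -zx.
  have exz : e x z.
    apply: adj_of_nonisolated => //; rewrite 1?eq_sym ?out //.
    by apply/isolatedPn; exists y; rewrite esym.
  by have := Iindep (x := x) (y := z); rewrite !inE xK zK exz => /(_ isT isT).
move=> x y xR yR wx wy nxy.
case xK: (x \in K); last by apply: key; rewrite ?xK.
case yK: (y \in K); first by apply: Kclique; rewrite ?xK ?yK.
by rewrite esym; apply: key; rewrite 1?eq_sym ?yK.
Qed.

End SplitGraph.

Theorem mainTheorem4 (T : finType) (e : rel T) (K : {set T})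
  (Hg : simple_graph e) (Hsplit : split_partition e K) (u v : T) (Huv : u != v) :
  shelling_feasible e (setT :\ u :\ v) <->
  (e u v \/ isolated e u \/ isolated e v).
Proof.
case: Hg => esym eirr; case: Hsplit => Kclique Iindep.
have kept : setT :\ u :\ v = [set: T] :\: [set u; v].
  by apply/setP => z; rewrite !inE negb_or !andbT andbC.
split=> [[s [Hs sh]] | huv].
- have inS z : (z \in s) = (z \notin [set u; v]).
    by move/setP/(_ z): Hs; rewrite kept !inE andbT => ->.
  have [euv | neuv] := boolP (e u v); first by left.
  have [iu | niu] := boolP (isolated e u); first by right; left.
  have [iv | niv] := boolP (isolated e v); first by right; right.
  have [x [y [ux vy xy]]] := split_bridge esym Kclique Iindep Huv neuv niu niv.
  have uS : u \in [set u; v] by rewrite !inE eqxx.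
  have vS : v \in [set u; v] by rewrite !inE eqxx orbT.
  have kept_notin a : a \in [set u; v] -> a \notin s by rewrite inS negbK.
  have nbr_in_s a b : a \in [set u; v] -> e a b -> b \in s.
    rewrite inS !inE => /orP[]/eqP-> ab; apply/norP; split;
      by apply: contraTneq ab => ->; rewrite ?eirr // esym.
  suff : e u v by rewrite (negbTE neuv).
  apply: (shelling_seq_bridge esym sh (in_setT u) (in_setT v) _ _ _ _ ux vy xy Huv);
    [exact: kept_notin uS | exact: kept_notin vS | exact: nbr_in_s uS ux | exact: nbr_in_s vS vy].
- rewrite kept; apply: shelling_seq_onto; last exact: subsetT.
  by move=> R uvR w0; apply: (exists_simplicial esym Kclique Iindep huv).
Qed.
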